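(* For every odd prime $p$, there exists a finite solvable group $G$ with $\sigma_2(G)=1+p^2+p^3+p^4$.
   Context: A 2-covering of a finite group $G$ is a set of proper subgroups of $G$ such that every pair of elements of $G$ is contained in at least one subgroup in the set. A finite group admits a 2-covering if and only if it cannot be generated by two elements. For such $G$, $\sigma_2(G)$ (the 2-covering number) denotes the smallest size of a 2-covering of $G$. *)

From mathcomp Require Import all_boot all_fingroup all_solvable.
Set Implicit Arguments. Unset Strict Implicit. Unset Printing Implicit Defensive.
Local Open Scope group_scope.

Definition two_covering (gT : finGroupType) (G : {group gT})
    (C : {set {group gT}}) : Prop :=
  (forall H : {group gT}, H \in C -> H \proper G) /\
  (forall x y : gT, x \in G -> y \in G ->
     exists2 H : {group gT}, H \in C & (x \in H) && (y \in H)).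

Definition sigma2_is (gT : finGroupType) (G : {group gT}) (n : nat) : Prop :=
  (exists C : {set {group gT}}, two_covering G C /\ #|C| = n) /\
  (forall C : {set {group gT}}, two_covering G C -> n <= #|C|).

From mathcomp Require Import all_boot all_fingroup all_solvable.
From HB Require Import structures.
From mathcomp Require Import ssralg finalg zmodp matrix mxalgebra.
From mathcomp Require Import ring.
Set Implicit Arguments. Unset Strict Implicit. Unset Printing Implicit Defensive.
Import GRing.Theory.
Local Open Scope ring_scope.

(* Take G = M_{2x3}(F_p) x| Q_8, where the quaternion group acts by left
   multiplication through its 2-dimensional representation over F_p, which
   exists because -1 is a sum of two squares modulo p.  G is solvable: the
   translations form an abelian normal subgroup with quotient Q_8.

   A column c <> 0 of F_p^3 turns each (A, B) in G into the affine map
   v |-> A v + B c of F_p^2, and the stabilisers of the points w are subgroups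
   depending only on the line of c.  As 1 - A is invertible for A <> 1, an
   element outside the translation subgroup N fixes a single point, and c can
   be chosen so that any second element fixes it too: N and the
   (p^2 + p + 1) p^2 stabilisers form a 2-covering.

   Conversely, let a proper subgroup K contain elements with linear parts i
   and j.  The translations of K form a Q_8-submodule, i.e. the matrices with
   rows in a proper subspace of F_p^3; an annihilator c of that subspace and
   the fixed point of an element of K acting as -1 put K inside a single
   stabiliser, determined by the pair.  One such pair for each stabiliser,
   plus a pair of translations lying in none of them, gives
   1 + p^2 + p^3 + p^4 pairs no two of which lie in a common proper
   subgroup. *)

Lemma kermx_nonzero (F : fieldType) m n (D : 'M[F]_(m, n)) :
  \rank D < n -> exists2 c : 'cV[F]_n, c != 0 & D *m c = 0.
Proof.
move=> rank_lt; set K := kermx D^T.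
have K_gt0 : 0 < \rank K by rewrite mxrank_ker mxrank_tr subn_gt0.
have [i Ki_neq0] : exists i, row i K != 0.
  apply/existsP; apply: contraTT K_gt0; rewrite negb_exists => /forallP K0.
  suff -> : K = 0 by rewrite mxrank0.
  by apply/row_matrixP => i; rewrite row0; apply/eqP; rewrite -[_ == _]negbK K0.
exists (row i K)^T; first by rewrite trmx_eq0.
by rewrite -[D]trmxK -trmx_mul -row_mul mulmx_ker row0 trmx0.
Qed.

Lemma subspace_annihilator (F : finFieldType) n (S : {set 'rV[F]_n}) :
  0 \in S -> {in S &, forall r s, r + s \in S} ->
  (forall k, {in S, forall r, k *: r \in S}) -> S != setT ->
  exists2 c : 'cV[F]_n, c != 0 & {in S, forall r, r *m c = 0}.
Proof.
move=> S0 SD SZ S_proper; set R := (\sum_(r in S) <<r>>)%MS.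
have sub_R r : r \in S -> (r <= R)%MS.
  by move=> Sr; apply: (sumsmx_sup r) => //; rewrite genmxE.
have R_not_full : ~~ row_full R.
  apply: contra S_proper => R_full; apply/eqP/setP => r; rewrite in_setT.
  have /sub_sumsmxP[u ->] := submx_full r R_full.
  apply: (big_ind (fun x => x \in S)) => // s Ss.
  have /submxP[d ->] : (u s *m <<s>> <= s)%MS.
    by rewrite (submx_trans (submxMl _ _)) ?genmxE.
  by rewrite [d]mx11_scalar mul_scalar_mx SZ.
have [c c_neq0 Rc] : exists2 c : 'cV[F]_n, c != 0 & R *m c = 0.
  by apply: kermx_nonzero; rewrite ltn_neqAle rank_leq_col andbT.
by exists c => // r /sub_R/submxP[d ->]; rewrite -mulmxA Rc mulmx0.
Qed.

Lemma submod_rowsE (F : finFieldType) n m (U : {set 'M[F]_(n.+1, m)}) :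
  0 \in U -> {in U &, forall B C, B + C \in U} ->
  (forall i j, {in U, forall B, delta_mx i j *m B \in U}) ->
  forall B, (B \in U) = [forall i, (delta_mx 0 0 : 'cV_n.+1) *m row i B \in U].
Proof.
move=> U0 UD Udelta B; apply/idP/forallP => [UB i | Urows].
  by rewrite rowE mulmxA mul_delta_mx Udelta.
rewrite -[B]mul1mx mx1_sum_delta mulmx_suml.
apply: (big_ind (fun X => X \in U)) => // i _.
have -> : delta_mx i i *m B = delta_mx i 0 *m ((delta_mx 0 0 : 'cV_n.+1) *m row i B).
  by rewrite rowE !mulmxA !mul_delta_mx.
exact: Udelta.
Qed.

Lemma scale_half_double (F : fieldType) (V : lmodType F) (v : V) :
  2 != 0 :> F -> 2^-1 *: (v + v) = v.
Proof. by move=> two_neq0; rewrite -mulr2n -scaler_nat scalerA mulVf // scale1r. Qed.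

Record mxgroup (F : finFieldType) (n : nat) := MxGroup {
  mxgroup_set :> {set 'M[F]_n};
  mxgroup1 : 1%:M \in mxgroup_set;
  mxgroupM : {in mxgroup_set &, forall A B, A *m B \in mxgroup_set};
  mxgroup_unit : {subset mxgroup_set <= unitmx};
  mxgroupV : {in mxgroup_set, forall A, invmx A \in mxgroup_set}
}.

Section AffineGroup.
Variables (F : finFieldType) (n m : nat) (G : mxgroup F n).

Definition affine := {x : 'M[F]_n * 'M[F]_(n, m) | x.1 \in G}.
HB.instance Definition _ := Finite.on affine.

Definition lin (x : affine) : 'M[F]_n := (val x).1.
Definition offset (x : affine) : 'M[F]_(n, m) := (val x).2.

Definition aff_mul (x y : affine) : affine :=
  exist _ (lin x *m lin y, lin x *m offset y + offset x) (mxgroupM (valP x) (valP y)).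
Definition aff_one : affine := exist _ (1%:M, 0) (mxgroup1 G).
Definition aff_inv (x : affine) : affine :=
  exist _ (invmx (lin x), - (invmx (lin x) *m offset x)) (mxgroupV (valP x)).

Lemma affine_eq x y : lin x = lin y -> offset x = offset y -> x = y.
Proof.
case: x y => [[A B] hA] [[C D] hC]; rewrite /lin /offset /= => eqAC eqBD.
by apply: val_inj; rewrite /= eqAC eqBD.
Qed.

Lemma aff_mulA : associative aff_mul.
Proof.
move=> x y z; apply: affine_eq; first exact: mulmxA.
by rewrite /offset /= mulmxDr mulmxA addrA.
Qed.

Lemma aff_mul1 : left_id aff_one aff_mul.
Proof. by move=> x; apply: affine_eq; rewrite /lin /offset /= !mul1mx ?addr0. Qed.

Lemma aff_mulV : left_inverse aff_one aff_inv aff_mul.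
Proof.
move=> x; apply: affine_eq; rewrite /lin /offset /= ?subrr //.
exact: mulVmx (mxgroup_unit (valP x)).
Qed.

HB.instance Definition _ := Finite_isGroup.Build affine aff_mulA aff_mul1 aff_mulV.

Lemma linM x y : lin (x * y)%g = lin x *m lin y. Proof. by []. Qed.
Lemma offsetM x y : offset (x * y)%g = lin x *m offset y + offset x.
Proof. by []. Qed.
Lemma lin1 : lin 1%g = 1%:M. Proof. by []. Qed.
Lemma offset1 : offset 1%g = 0. Proof. by []. Qed.
Lemma linV x : lin x^-1%g = invmx (lin x). Proof. by []. Qed.
Lemma offsetV x : offset x^-1%g = - (invmx (lin x) *m offset x). Proof. by []. Qed.
Lemma lin_unit x : lin x \in unitmx. Proof. exact: mxgroup_unit (valP x). Qed.

Lemma linX x k : lin (x ^+ k)%g = lin x ^+ k.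
Proof. by elim: k => [|k IHk]; rewrite ?expgS ?exprS // linM IHk mulmxE. Qed.

Definition translation (B : 'M[F]_(n, m)) : affine := exist _ (1%:M, B) (mxgroup1 G).

Lemma lin_translation B : lin (translation B) = 1%:M. Proof. by []. Qed.
Lemma offset_translation B : offset (translation B) = B. Proof. by []. Qed.

Lemma translationD B C : translation (B + C) = (translation B * translation C)%g.
Proof. by apply: affine_eq; rewrite ?linM ?offsetM /= ?mul1mx // addrC. Qed.

Lemma translation0 : translation 0 = 1%g.
Proof. exact: affine_eq. Qed.

Lemma translation_conj z B :
  (z * translation B * z^-1)%g = translation (lin z *m B).
Proof.
apply: affine_eq.
  by rewrite !linM linV lin_translation mulmx1 mulmxV ?lin_unit.
rewrite !offsetM linM lin_translation mulmx1 offsetV offset_translation.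
by rewrite mulmxN mulmxA mulmxV ?lin_unit // mul1mx addrC addrK.
Qed.

Lemma translation_div x z :
  lin x = lin z -> (x * z^-1)%g = translation (offset x - offset z).
Proof.
move=> eq_lin; apply: affine_eq.
  by rewrite linM linV eq_lin mulmxV ?lin_unit.
rewrite offsetM offsetV offset_translation eq_lin mulmxN mulmxA.
by rewrite mulmxV ?lin_unit // mul1mx addrC.
Qed.

Definition translations : {set affine} := [set x | lin x == 1%:M].

Lemma translations_group_set : group_set translations.
Proof.
apply/group_setP; split=> [|x y]; rewrite !inE ?lin1 //.
by rewrite linM => /eqP-> /eqP->; rewrite mul1mx.
Qed.
Canonical translations_group := Group translations_group_set.

Definition linproj (x : affine) : affine := exist _ (lin x, 0) (valP x).

Lemma linprojM : {morph linproj : x y / (x * y)%g}.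
Proof. by move=> x y; apply: affine_eq; rewrite // offsetM /= mulmx0 add0r. Qed.

Canonical linproj_morphism := @Morphism _ _ [set: affine] linproj (in2W linprojM).

Lemma affine_sol (p e : nat) :
  p.-nat e -> {in G, forall A, A ^+ e = 1%:M} -> solvable [set: affine].
Proof.
move=> p_e G_e; rewrite (series_sol (ker_normal linproj_morphism)).
apply/andP; split.
  apply/abelian_sol/centsP => x /mker x1 y /mker y1.
  have [lx1 ly1] : lin x = 1%:M /\ lin y = 1%:M.
    by split; [move/(congr1 lin): x1 | move/(congr1 lin): y1].
  by apply: affine_eq; rewrite ?linM ?offsetM lx1 ly1 ?mul1mx // addrC.
rewrite (isog_sol (first_isog linproj_morphism)).
apply: (@pgroup_sol _ p); rewrite -pnat_exponent (pnat_dvd _ p_e) //.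
apply/exponentP => _ /morphimP[x _ _ ->]; rewrite -morphX ?inE //.
by apply: affine_eq => //; rewrite lin1 -(G_e (lin x) (valP x)) -linX.
Qed.

(* The stabiliser of [w] for the affine action v |-> lin x *m v + offset x *m c. *)
Definition stab (c : 'cV[F]_m) (w : 'cV[F]_n) : {set affine} :=
  [set x | offset x *m c == (1%:M - lin x) *m w].

Lemma stab_group_set c w : group_set (stab c w).
Proof.
apply/group_setP; split=> [|x y]; first by rewrite inE offset1 lin1 subrr !mul0mx.
rewrite !inE offsetM linM => /eqP xc /eqP yc.
rewrite mulmxDl -mulmxA yc xc mulmxA mulmxBr mulmx1 -mulmxDl.
by rewrite addrC addrA subrK.
Qed.
Canonical stab_group c w := Group (stab_group_set c w).

Lemma translation_stab B c w : (translation B \in stab c w) = (B *m c == 0).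
Proof. by rewrite inE lin_translation offset_translation subrr mul0mx. Qed.

Lemma stab_scale c w k : k != 0 -> stab (k *: c) (k *: w) = stab c w.
Proof.
by move=> k_neq0; apply/setP => x; rewrite !inE -!scalemxAr (inj_eq (scalerI k_neq0)).
Qed.

Lemma stab_cover x y :
  n < m -> 1%:M - lin x \in unitmx ->
  exists c w, [/\ c != 0, x \in stab c w & y \in stab c w].
Proof.
move=> n_lt_m x_fpf; set V := invmx (1%:M - lin x).
(* x fixes exactly V *m offset x *m c; c is chosen so that y fixes it too. *)
set D := offset y - (1%:M - lin y) *m V *m offset x.
have [c c_neq0 Dc] : exists2 c : 'cV[F]_m, c != 0 & D *m c = 0.
  exact: kermx_nonzero (leq_ltn_trans (rank_leq_row D) n_lt_m).
exists c, (V *m offset x *m c); split=> //; rewrite inE.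
  by rewrite !mulmxA mulmxV ?mul1mx.
by move/eqP: Dc; rewrite mulmxBl subr_eq0 !mulmxA => /eqP->.
Qed.

Definition offsets (K : {set affine}) : {set 'M[F]_(n, m)} :=
  [set B | translation B \in K].

Section Offsets.
Variable K : {group affine}.

Lemma offsets0 : 0 \in offsets K.
Proof. by rewrite inE translation0 group1. Qed.

Lemma offsetsD : {in offsets K &, forall B C, B + C \in offsets K}.
Proof. by move=> B C; rewrite !inE translationD; apply: groupM. Qed.

Lemma offsetsMn B i : B \in offsets K -> B *+ i \in offsets K.
Proof.
by move=> KB; elim: i => [|i IHi]; rewrite ?mulr0n ?offsets0 // mulrS offsetsD.
Qed.

Lemma offsets_lin z B : z \in K -> B \in offsets K -> lin z *m B \in offsets K.
Proof. by rewrite !inE -translation_conj => Kz KB; rewrite !groupM ?groupV. Qed.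

Lemma offsets_div x z :
  x \in K -> z \in K -> lin x = lin z -> offset x - offset z \in offsets K.
Proof. by move=> Kx Kz eq_lin; rewrite inE -translation_div // groupM ?groupV. Qed.

Lemma affine_subgroup_full :
  (forall B, B \in offsets K) -> {in G, forall A, exists2 z, z \in K & lin z = A} ->
  K :=: [set: affine].
Proof.
move=> K_offsets K_lin; apply/setP => x; rewrite in_setT.
have [z Kz zx] := K_lin _ (valP x).
rewrite -(mulgKV z x) groupMr // translation_div; last by rewrite zx.
by have := K_offsets (offset x - offset z); rewrite inE.
Qed.

Lemma subgroup_sub_stab z0 c :
  2 != 0 :> F -> z0 \in K -> lin z0 = - 1%:M ->
  {in offsets K, forall B, B *m c = 0} ->
  K \subset stab c (2^-1 *: (offset z0 *m c)).
Proof.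
move=> two_neq0 Kz0 z0_inv Kc; apply/subsetP => z Kz; rewrite inE.
(* z * z0 and z0 * z differ by a translation of K, annihilated by c. *)
have lin_comm : lin (z * z0)%g = lin (z0 * z)%g.
  by rewrite !linM z0_inv mulmxN mulNmx mulmx1 mul1mx.
have := Kc _ (offsets_div (groupM Kz Kz0) (groupM Kz0 Kz) lin_comm).
rewrite !offsetM z0_inv => /eqP.
set A := lin z; set B := offset z; set B0 := offset z0.
have -> : A *m B0 + B - (- 1%:M *m B + B0) = B + B - (1%:M - A) *m B0.
  rewrite mulNmx mulmxBl !mul1mx opprB opprD opprK [RHS]addrACA.
  by congr (_ + _); apply: addrC.
rewrite mulmxBl subr_eq0 -mulmxA => /eqP Bc.
by rewrite -scalemxAr -Bc mulmxDl scale_half_double.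
Qed.

End Offsets.

End AffineGroup.

Section Quaternions.
Variables (F : fieldType) (a b : F).

Definition mx2 (x y z t : F) : 'M[F]_2 :=
  \matrix_(i < 2, j < 2) nth 0 (nth [::] [:: [:: x; y]; [:: z; t]] i) j.

Definition quat_i := mx2 0 (-1) 1 0.
Definition quat_j := mx2 a b b (-a).
Definition quat_k := mx2 (-b) a a b.

Definition quaternions : seq 'M[F]_2 :=
  [:: 1%:M; quat_i; quat_j; quat_k; - 1%:M; - quat_i; - quat_j; - quat_k].

Lemma quat_i_neq1 : quat_i != 1%:M.
Proof.
by apply/eqP => /matrixP /(_ 0 0); rewrite !mxE /= => /eqP; rewrite eq_sym oner_eq0.
Qed.

Hypothesis sumsq_ab : a ^+ 2 + b ^+ 2 = -1.

Let sumsq_ab1 : a * a + b * b + 1 = 0.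
Proof. by rewrite -!expr2 sumsq_ab addNr. Qed.

Ltac mx2_ring := apply/matrixP; case=> [[|[|//]] ?]; case=> [[|[|//]] ?];
  rewrite !mxE ?big_ord_recl ?big_ord0 /= ?mxE /=;
  first [ ring
        | apply: subr0_eq; transitivity (a * a + b * b + 1); [ring | exact: sumsq_ab1]
        | apply: subr0_eq; transitivity (- (a * a + b * b + 1));
          [ring | by rewrite sumsq_ab1 oppr0] ].

Lemma quat_ii : quat_i *m quat_i = - 1%:M. Proof. mx2_ring. Qed.
Lemma quat_jj : quat_j *m quat_j = - 1%:M. Proof. mx2_ring. Qed.
Lemma quat_kk : quat_k *m quat_k = - 1%:M. Proof. mx2_ring. Qed.
Lemma quat_ij : quat_i *m quat_j = quat_k. Proof. mx2_ring. Qed.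
Lemma quat_ji : quat_j *m quat_i = - quat_k. Proof. mx2_ring. Qed.
Lemma quat_jk : quat_j *m quat_k = quat_i. Proof. mx2_ring. Qed.
Lemma quat_kj : quat_k *m quat_j = - quat_i. Proof. mx2_ring. Qed.
Lemma quat_ki : quat_k *m quat_i = quat_j. Proof. mx2_ring. Qed.
Lemma quat_ik : quat_i *m quat_k = - quat_j. Proof. mx2_ring. Qed.

Lemma quaternionsM A B :
  A \in quaternions -> B \in quaternions -> A *m B \in quaternions.
Proof.
move=> QA QB; rewrite !inE in QA QB.
do 7?[case/orP: QA => [/eqP-> | QA]]; try move/eqP: QA => ->;
do 7?[case/orP: QB => [/eqP-> | QB]]; try move/eqP: QB => ->;
rewrite ?mul1mx ?mulmx1 ?mulNmx ?mulmxN ?mul1mx ?mulmx1 ?opprK ?quat_ii ?quat_jj ?quat_kk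
  ?quat_ij ?quat_ji ?quat_jk ?quat_kj ?quat_ki ?quat_ik ?opprK !inE eqxx ?orTb ?orbT //.
Qed.

Lemma quaternions_sq A :
  A \in quaternions -> [\/ A = 1%:M, A = - 1%:M | A *m A = - 1%:M].
Proof.
move=> QA; rewrite !inE in QA.
do 7?[case/orP: QA => [/eqP-> | QA]]; try move/eqP: QA => ->.
all: first [by constructor 1 | by constructor 2 | constructor 3].
all: by rewrite ?mulNmx ?mulmxN ?opprK ?quat_ii ?quat_jj ?quat_kk.
Qed.

Hypothesis two_neq0 : 2 != 0 :> F.

Lemma quaternions_unit_subr A :
  A \in quaternions -> A != 1%:M -> 1%:M - A \in unitmx.
Proof.
case/quaternions_sq=> [-> | -> | AA] A_neq1; first by rewrite eqxx in A_neq1.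
  apply: (proj1 (@mulmx1_unit _ _ _ (2^-1 *: 1%:M) _)).
  by rewrite -scalemxAr mulmx1 opprK scale_half_double.
apply: (proj1 (@mulmx1_unit _ _ _ (2^-1 *: (1%:M + A)) _)).
rewrite -scalemxAr mulmxBl !mulmxDr AA !mul1mx mulmx1.
by rewrite opprD opprK !addrA addrK scale_half_double.
Qed.

Lemma quat_delta00 :
  delta_mx 0 0 = 2^-1 *: (1%:M + b *: quat_k - a *: quat_j) :> 'M[F]_2.
Proof.
by apply: (canRL (scalerK two_neq0)); mx2_ring.
Qed.

Lemma quat_delta10 : delta_mx 1 0 = quat_i *m delta_mx 0 0 :> 'M[F]_2.
Proof. mx2_ring. Qed.

Lemma quat_delta01 : delta_mx 0 1 = - (delta_mx 0 0 *m quat_i) :> 'M[F]_2.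
Proof. mx2_ring. Qed.

End Quaternions.

Arguments quat_i {F}.
Arguments quat_i_neq1 {F}.

Section QuaternionGroup.
Variables (F : finFieldType) (a b : F).
Hypothesis sumsq_ab : a ^+ 2 + b ^+ 2 = -1.

Definition quat_set : {set 'M[F]_2} := [set A | A \in quaternions a b].

Lemma quat_setX A k : A \in quat_set -> A ^+ k \in quat_set.
Proof.
rewrite !in_set => QA; elim: k => [|k IHk]; first by rewrite expr0 !inE eqxx.
by rewrite exprS -mulmxE quaternionsM.
Qed.

Lemma quat_set_exp4 A : A \in quat_set -> A ^+ 4 = 1%:M.
Proof.
rewrite in_set => QA; rewrite (exprM A 2 2) [A ^+ 2]expr2 -mulmxE.
have [-> | ->] : A *m A = 1%:M \/ A *m A = - 1%:M.
- case: (quaternions_sq sumsq_ab QA) => [-> | -> | ->]; last by right.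
    by left; rewrite mul1mx.
  by left; rewrite mulNmx mulmxN opprK mul1mx.
- by rewrite expr2 -mulmxE mul1mx.
- by rewrite expr2 -mulmxE mulNmx mulmxN opprK mul1mx.
Qed.

Lemma quat_set_mulX3 A : A \in quat_set -> A *m A ^+ 3 = 1%:M.
Proof. by move/quat_set_exp4; rewrite mulmxE -exprS. Qed.

Lemma quat_set1 : 1%:M \in quat_set.
Proof. by rewrite !inE eqxx. Qed.

Lemma quat_setM : {in quat_set &, forall A B, A *m B \in quat_set}.
Proof. by move=> A B; rewrite !in_set; apply: quaternionsM. Qed.

Lemma quat_set_unit : {subset quat_set <= unitmx}.
Proof. by move=> A /quat_set_mulX3 /mulmx1_unit[]. Qed.

Lemma quat_setV : {in quat_set, forall A, invmx A \in quat_set}.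
Proof.
move=> A QA; rewrite -[invmx A]mulmx1 -(quat_set_mulX3 QA) mulmxA.
by rewrite mulVmx ?quat_set_unit // mul1mx quat_setX.
Qed.

Definition quat_group := MxGroup quat_set1 quat_setM quat_set_unit quat_setV.

End QuaternionGroup.

Section ProjectivePlane.
Variable F : finFieldType.

(* Points of the projective plane, through the normalised representatives
   (1, x, y), (0, 1, y) and (0, 0, 1) given by [pvec]. *)
Definition point := option ((F * F) + F)%type.
HB.instance Definition _ := Finite.on point.

Definition col3 (x y z : F) : 'cV[F]_3 := \col_i nth 0 [:: x; y; z] i.
Definition row3 (x y z : F) : 'rV[F]_3 := \row_i nth 0 [:: x; y; z] i.
Definition mx23 (x0 x1 x2 y0 y1 y2 : F) : 'M[F]_(2, 3) :=
  \matrix_(i, j) nth 0 (nth [::] [:: [:: x0; x1; x2]; [:: y0; y1; y2]] i) j.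

Definition pvec (q : point) : 'cV[F]_3 :=
  match q with
  | Some (inl (x, y)) => col3 1 x y
  | Some (inr y) => col3 0 1 y
  | None => col3 0 0 1
  end.

Definition pdual (q : point) : 'rV[F]_3 :=
  match q with
  | Some (inl _) => row3 1 0 0
  | Some (inr _) => row3 0 1 0
  | None => row3 0 0 1
  end.

Definition pannih (q : point) : 'M[F]_(2, 3) :=
  match q with
  | Some (inl (x, y)) => mx23 (- x) 1 0 (- y) 0 1
  | Some (inr y) => mx23 1 0 0 0 (- y) 1
  | None => mx23 1 0 0 0 1 0
  end.

Ltac mx3_ring := apply/matrixP; case=> [[|[|[|?]]] ?] //; case=> [[|[|[|?]]] ?] //;
  do 3 (rewrite ?mxE ?big_ord_recl ?big_ord0 /=); try ring.

Ltac ring_by e := match type of e with ?E = 0 => apply: subr0_eq;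
  first [ transitivity E; [ring | exact: e]
        | transitivity (- E); [ring | by rewrite e oppr0] ] end.

Lemma col3_eta (c : 'cV[F]_3) : c = col3 (c 0 0) (c 1 0) (c 2 0).
Proof.
apply/matrixP; case=> [[|[|[|?]]] ?] //; case=> [[|?] ?] //; rewrite !mxE /=;
  by congr (c _ _); apply: val_inj.
Qed.

Lemma col3_inj x y z x' y' z' :
  col3 x y z = col3 x' y' z' -> [/\ x = x', y = y' & z = z'].
Proof. by move/matrixP => eq_c; move: (eq_c 0 0) (eq_c 1 0) (eq_c 2 0); rewrite !mxE. Qed.

Lemma scale_col3 k x y z : k *: col3 x y z = col3 (k * x) (k * y) (k * z).
Proof. by mx3_ring. Qed.

Lemma col3_0 : col3 0 0 0 = 0.
Proof. by mx3_ring. Qed.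

Lemma pdual_pvec q : pdual q *m pvec q = 1%:M :> 'M[F]_1.
Proof. by case: q => [[[x y]|y]|]; mx3_ring. Qed.

Lemma pannih_pvec q : pannih q *m pvec q = 0.
Proof. by case: q => [[[x y]|y]|]; mx3_ring. Qed.

Lemma pvec_neq0 q : pvec q != 0.
Proof.
apply/eqP => q0; have := pdual_pvec q; rewrite q0 mulmx0 => /matrixP/(_ 0 0).
by rewrite !mxE /= => /eqP; rewrite eq_sym oner_eq0.
Qed.

Lemma pannih_ker q (c : 'cV[F]_3) : pannih q *m c = 0 -> c = pvec q *m (pdual q *m c).
Proof.
rewrite [c]col3_eta; move: (c 0 0) (c 1 0) (c 2 0) => c0 c1 c2.
case: q => [[[x y]|y]|] /matrixP eq_c; move: (eq_c 0 0) (eq_c 1 0);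
  do 3 (rewrite ?mxE ?big_ord_recl ?big_ord0 /=); move=> e0 e1; mx3_ring.
all: first [ ring_by e0 | ring_by e1 ].
Qed.

Lemma pvec_scale_inj q q' k : pvec q' = k *: pvec q -> k = 1 /\ q' = q.
Proof.
case: q q' => [[[x y]|y]|] [[[x' y']|y']|] /=; rewrite scale_col3 ?mulr0 ?mulr1;
  case/col3_inj => e0 e1 e2; subst; rewrite ?mul1r //.
all: exfalso; match goal with
  | H : 1 = _ |- _ => by move/eqP: H; rewrite ?mul0r oner_eq0
  | H : _ = 1 |- _ => by move/eqP: H; rewrite ?mul0r eq_sym oner_eq0
  end.
Qed.

Lemma pvec_normalize (c : 'cV[F]_3) :
  c != 0 -> exists q k, k != 0 /\ c = k *: pvec q.
Proof.
rewrite [c]col3_eta; move: (c 0 0) (c 1 0) (c 2 0) => c0 c1 c2 c_neq0.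
have [c0_eq0 | c0_neq0] := eqVneq c0 0; last first.
  exists (Some (inl (c1 / c0, c2 / c0))), c0; split=> //=.
  by rewrite scale_col3; congr col3; field.
have [c1_eq0 | c1_neq0] := eqVneq c1 0; last first.
  exists (Some (inr (c2 / c1))), c1; split=> //=.
  by rewrite scale_col3 c0_eq0; congr col3; field.
have [c2_eq0 | c2_neq0] := eqVneq c2 0.
  by move: c_neq0; rewrite c0_eq0 c1_eq0 c2_eq0 col3_0 eqxx.
exists None, c2; split=> //=.
by rewrite scale_col3 c0_eq0 c1_eq0; congr col3; field.
Qed.

Lemma card_point : #|{: point}| = (#|F| ^ 2 + #|F| + 1)%N.
Proof. by rewrite card_option card_sum card_prod addn1. Qed.

End ProjectivePlane.

Lemma two_covering_card_ge (gT : finGroupType) (H : {group gT}) (I : finType)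
    (P : I -> gT * gT) (C : {set {group gT}}) :
  (forall i, (P i).1 \in H /\ (P i).2 \in H) ->
  (forall K : {group gT}, K \proper H -> forall i j,
     (P i).1 \in K -> (P i).2 \in K -> (P j).1 \in K -> (P j).2 \in K -> i = j) ->
  two_covering H C -> (#|I| <= #|C|)%N.
Proof.
move=> PH P_sep [C_proper C_cover].
pose f i := odflt 1%G [pick K in C | ((P i).1 \in K) && ((P i).2 \in K)].
have fP i : [/\ f i \in C, (P i).1 \in f i & (P i).2 \in f i].
  rewrite /f; case: pickP => [K /andP[CK /andP[]] // | noK] /=.
  have [K CK /andP[K1 K2]] := C_cover _ _ (PH i).1 (PH i).2.
  by move: (noK K); rewrite CK K1 K2.
have f_inj : injective f.
  move=> i j eq_f; have [Ci Pi1 Pi2] := fP i; have [_] := fP j; rewrite -eq_f.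
  exact: P_sep (C_proper _ Ci) i j Pi1 Pi2.
rewrite -cardsT -(card_imset _ f_inj); apply: subset_leq_card.
by apply/subsetP => _ /imsetP[i _ ->]; case: (fP i).
Qed.

Lemma ord2_cases (i : 'I_2) : i = 0 \/ i = 1.
Proof. by case: i => [[|[|//]] ?]; [left | right]; apply: val_inj. Qed.

Section QuaternionAffine.
Variables (F : finFieldType) (a b : F).
Hypothesis sumsq_ab : a ^+ 2 + b ^+ 2 = -1.
Hypothesis two_neq0 : 2 != 0 :> F.
(* Makes every additive subgroup of matrices an F-subspace. *)
Hypothesis prime_field : forall k : F, exists i : nat, k = i%:R.

Local Notation G := (quat_group sumsq_ab).
Local Notation T := (affine 3 G).

Lemma quat_group_i : quat_i \in G.
Proof. by rewrite in_set !inE eqxx orbT. Qed.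

Lemma quat_group_j : quat_j a b \in G.
Proof. by rewrite in_set !inE eqxx !orbT. Qed.

Section Generators.
Variables (K : {group T}) (x y : T).
Hypotheses (Kx : x \in K) (Ky : y \in K).
Hypotheses (x_i : lin x = quat_i) (y_j : lin y = quat_j a b).

Lemma quat_lin_onto : {in G, forall A, exists2 z, z \in K & lin z = A}.
Proof.
have Kxx : (x * x)%g \in K by rewrite groupM.
have xx : lin (x * x)%g = - 1%:M by rewrite linM x_i quat_ii.
move=> A; rewrite in_set !inE.
do 7?[case/orP => [/eqP-> | ]]; last move/eqP->.
- by exists 1%g.
- by exists x.
- by exists y.
- by exists (x * y)%g; rewrite ?groupM // linM x_i y_j quat_ij.
- by exists (x * x)%g.
- by exists (x * x * x)%g; rewrite ?groupM // linM xx x_i mulNmx mul1mx.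
- by exists (x * x * y)%g; rewrite ?groupM // linM xx y_j mulNmx mul1mx.
- exists (x * x * (x * y))%g; rewrite ?groupM //.
  by rewrite linM xx linM x_i y_j quat_ij mulNmx mul1mx.
Qed.

Lemma offsetsZ k B : B \in offsets K -> k *: B \in offsets K.
Proof. by have [i ->] := prime_field k; rewrite scaler_nat; apply: offsetsMn. Qed.

Lemma offsets_delta i j : {in offsets K, forall B, delta_mx i j *m B \in offsets K}.
Proof.
have Ui B : B \in offsets K -> quat_i *m B \in offsets K.
  by rewrite -x_i; apply: offsets_lin.
have Uj B : B \in offsets K -> quat_j a b *m B \in offsets K.
  by rewrite -y_j; apply: offsets_lin.
have U00 B : B \in offsets K -> delta_mx 0 0 *m B \in offsets K.
  move=> UB; rewrite (quat_delta00 sumsq_ab two_neq0) -scalemxAl offsetsZ //.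
  rewrite mulmxBl mulmxDl mul1mx -!scalemxAl -quat_ij -mulmxA.
  apply: offsetsD; first by apply: offsetsD => //; apply/offsetsZ/Ui/Uj.
  by rewrite -scaleNr; apply/offsetsZ/Uj.
have [-> | ->] := ord2_cases i.
  have [-> | ->] := ord2_cases j; first exact: U00.
  move=> B UB; rewrite quat_delta01 mulNmx -mulmxA.
  by rewrite -scaleN1r offsetsZ ?U00 ?Ui.
have [-> | ->] := ord2_cases j.
  by move=> B UB; rewrite quat_delta10 -mulmxA Ui ?U00.
move=> B UB; have -> : delta_mx 1 1 = 1%:M - delta_mx 0 0 :> 'M[F]_2.
  apply/matrixP => i' j'; rewrite !mxE.
  by case: (ord2_cases i') (ord2_cases j') => -> [] ->; rewrite /= ?subrr ?subr0.
by rewrite mulmxBl mul1mx offsetsD // -scaleN1r offsetsZ ?U00.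
Qed.

Lemma quat_subgroup_max :
  K :=: [set: T] \/ exists2 c : 'cV[F]_3, c != 0 & exists w, K \subset stab G c w.
Proof.
set S := [set r : 'rV[F]_3 | (delta_mx 0 0 : 'cV[F]_2) *m r \in offsets K].
have SE r : (r \in S) = ((delta_mx 0 0 : 'cV[F]_2) *m r \in offsets K).
  by rewrite in_set.
have rowsE := submod_rowsE (offsets0 K) (@offsetsD _ _ _ _ K) offsets_delta.
have [S_full | S_proper] := eqVneq S setT.
  left; apply: affine_subgroup_full quat_lin_onto => B; rewrite rowsE.
  by apply/forallP => i; move: (in_setT (row i B)); rewrite -S_full SE.
have S0 : 0 \in S by rewrite SE mulmx0 offsets0.
have SD : {in S &, forall r s, r + s \in S}.
  by move=> r s; rewrite !SE mulmxDr; apply: offsetsD.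
have SZ k : {in S, forall r, k *: r \in S}.
  by move=> r; rewrite !SE -scalemxAr; apply: offsetsZ.
have [c c_neq0 Sc] := subspace_annihilator S0 SD SZ S_proper.
right; exists c => //; exists (2^-1 *: (offset (x * x)%g *m c)).
apply: subgroup_sub_stab => //; first by rewrite groupM.
  by rewrite linM x_i quat_ii.
move=> B; rewrite rowsE => /forallP UB; apply/row_matrixP => i.
by rewrite row_mul row0 Sc // SE UB.
Qed.

End Generators.

Lemma lin_unit_subr (x : T) : lin x != 1%:M -> 1%:M - lin x \in unitmx.
Proof.
move=> x_neq1; apply: (quaternions_unit_subr sumsq_ab two_neq0) x_neq1.
by have := valP x; rewrite in_set.
Qed.

Definition pair_x (q : point F) (w : 'cV[F]_2) : T :=
  exist _ (quat_i, (1%:M - quat_i) *m w *m pdual q) quat_group_i.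
Definition pair_y (q : point F) (w : 'cV[F]_2) : T :=
  exist _ (quat_j a b, (1%:M - quat_j a b) *m w *m pdual q + pannih q) quat_group_j.

Lemma pair_stab q w :
  pair_x q w \in stab G (pvec q) w /\ pair_y q w \in stab G (pvec q) w.
Proof.
rewrite !inE /offset /lin /= -!mulmxA pdual_pvec mulmx1 eqxx; split=> //.
by rewrite [(_ + pannih q) *m _]mulmxDl pannih_pvec addr0 -!mulmxA pdual_pvec mulmx1.
Qed.

Lemma stab_pair_scale q w c w' :
  pair_x q w \in stab G c w' -> pair_y q w \in stab G c w' ->
  exists k, c = k *: pvec q /\ w' = k *: w.
Proof.
rewrite !inE /offset /lin /= => /eqP xc /eqP yc.
set k := (pdual q *m c) 0 0; have dual_c : pdual q *m c = k%:M := mx11_scalar _.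
have i_fpf : 1%:M - (quat_i : 'M[F]_2) \in unitmx.
  by apply: (quaternions_unit_subr sumsq_ab two_neq0) quat_i_neq1; rewrite !inE eqxx orbT.
have w'E : w' = k *: w.
  move: xc; rewrite -!mulmxA dual_c mul_mx_scalar.
  move/(congr1 (mulmx (invmx (1%:M - quat_i)))).
  by rewrite !mulmxA mulVmx // !mul1mx => ->.
exists k; split=> //; move: yc.
rewrite [(_ + pannih q) *m c]mulmxDl -!mulmxA dual_c mul_mx_scalar -w'E.
move/(canRL (addKr _)); rewrite addNr => /pannih_ker->.
by rewrite dual_c mul_mx_scalar.
Qed.

Lemma stab_pvec_inj q w q' w' :
  stab G (pvec q) w = stab G (pvec q') w' -> q = q' /\ w = w'.
Proof.
move=> eq_stab; have [] := pair_stab q w; rewrite eq_stab => xq yq.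
have [k [/pvec_scale_inj[-> ->] ->]] := stab_pair_scale xq yq.
by rewrite scale1r.
Qed.

Definition trans_x : T := translation G (mx23 1 0 0 0 1 0).
Definition trans_y : T := translation G (mx23 0 0 1 0 0 0).

Lemma stab_trans_xy c w : trans_x \in stab G c w -> trans_y \in stab G c w -> c = 0.
Proof.
rewrite !translation_stab [c]col3_eta; move: (c 0 0) (c 1 0) (c 2 0) => c0 c1 c2.
move=> /eqP/matrixP cx /eqP/matrixP cy; move: (cx 0 0) (cx 1 0) (cy 0 0).
do 3 (rewrite ?mxE ?big_ord_recl ?big_ord0 /=).
by rewrite !mul1r !mul0r !add0r !addr0 => -> -> ->; rewrite col3_0.
Qed.

Definition quat_cover : {set {group T}} :=
  translations_group 3 G |: [set stab_group G (pvec qw.1) qw.2 | qw : point F * 'cV[F]_2].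

Lemma translation_notin_stab q w :
  translation G ((delta_mx 0 0 : 'cV[F]_2) *m pdual q) \notin stab G (pvec q) w.
Proof.
rewrite translation_stab -mulmxA pdual_pvec mulmx1.
by apply/eqP => /matrixP/(_ 0 0); rewrite !mxE /= => /eqP; rewrite oner_eq0.
Qed.

Lemma stab_normalize c w : c != 0 -> exists q w', stab G c w = stab G (pvec q) w'.
Proof.
case/pvec_normalize => q [k [k_neq0 ->]]; exists q, (k^-1 *: w).
by rewrite -{1}(scalerKV k_neq0 w) stab_scale.
Qed.

Lemma quat_cover_pair x y : exists2 K, K \in quat_cover & (x \in K) && (y \in K).
Proof.
wlog x_neq1 : x y / lin x != 1%:M.
  move=> gen; have [x1 | ] := eqVneq (lin x) 1%:M; last exact: gen.
  have [y1 | y_neq1] := eqVneq (lin y) 1%:M.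
    by exists (translations_group 3 G); rewrite ?setU11 // !inE x1 y1 eqxx.
  by have [K CK /andP[Ky Kx]] := gen y x y_neq1; exists K; rewrite ?Kx.
have [c [w [c_neq0 xc yc]]] := stab_cover y (isT : 2 < 3) (lin_unit_subr x_neq1).
have [q [w' stabE]] := stab_normalize w c_neq0.
exists (stab_group G (pvec q) w'); last by rewrite /= -stabE xc yc.
by rewrite in_setU1; apply/orP; right; apply/imsetP; exists (q, w').
Qed.

Lemma quat_cover_proper K : K \in quat_cover -> K \proper [set: T].
Proof.
rewrite properT in_setU1 => /orP[/eqP-> | /imsetP[[q w] _ ->]] /=.
  apply/eqP => /setP/(_ (exist _ (quat_i, 0) quat_group_i)).
  by rewrite !inE (negbTE quat_i_neq1).
apply/eqP => /setP/(_ (translation G ((delta_mx 0 0 : 'cV[F]_2) *m pdual q))).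
by rewrite in_setT (negbTE (translation_notin_stab q w)).
Qed.

Lemma quat_cover_two_covering : two_covering [set: T]%G quat_cover.
Proof. by split=> [K /quat_cover_proper // | x y _ _]; apply: quat_cover_pair. Qed.

Lemma card_quat_cover : #|quat_cover| = (1 + #|{: point F}| * #|{: 'cV[F]_2}|)%N.
Proof.
have stab_inj : injective (fun qw : point F * 'cV[F]_2 => stab_group G (pvec qw.1) qw.2).
  move=> [q w] [q' w'] /(congr1 val) /= /stab_pvec_inj[-> ->] //.
rewrite cardsU1 card_imset // card_prod; congr (_ + _)%N.
apply/eqP; rewrite eqn_leq leq_b1 lt0b; apply/imsetP => -[[q w] _ /(congr1 val) /=].
move/setP/(_ (translation G ((delta_mx 0 0 : 'cV[F]_2) *m pdual q))).
by rewrite (negbTE (translation_notin_stab q w)) inE lin_translation eqxx.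
Qed.

Lemma pair_proper_stab (K : {group T}) q w :
  K \proper [set: T] -> pair_x q w \in K -> pair_y q w \in K ->
  K \subset stab G (pvec q) w.
Proof.
move=> K_proper Kx Ky.
have [K_full | [c c_neq0 [w' K_stab]]] := quat_subgroup_max Kx Ky erefl erefl.
  by move: K_proper; rewrite K_full properE subxx.
have [k [ck w'k]] := stab_pair_scale (subsetP K_stab _ Kx) (subsetP K_stab _ Ky).
have k_neq0 : k != 0 by apply: contra_neq c_neq0 => k0; rewrite ck k0 scale0r.
by rewrite -(stab_scale G _ _ k_neq0) -ck -w'k.
Qed.

Definition test_pair (l : option (point F * 'cV[F]_2)) : T * T :=
  if l is Some (q, w) then (pair_x q w, pair_y q w) else (trans_x, trans_y).

Lemma test_pair_sep (K : {group T}) : K \proper [set: T] -> forall l l',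
  (test_pair l).1 \in K -> (test_pair l).2 \in K ->
  (test_pair l').1 \in K -> (test_pair l').2 \in K -> l = l'.
Proof.
move=> K_proper [[q w]|] [[q' w']|] //= Kx Ky Kx' Ky'.
- have /subsetP K_stab := pair_proper_stab K_proper Kx Ky.
  have [k [/pvec_scale_inj[-> ->] ->]] := stab_pair_scale (K_stab _ Kx') (K_stab _ Ky').
  by rewrite scale1r.
- have /subsetP K_stab := pair_proper_stab K_proper Kx Ky.
  by have := pvec_neq0 q; rewrite (stab_trans_xy (K_stab _ Kx') (K_stab _ Ky')) eqxx.
- have /subsetP K_stab := pair_proper_stab K_proper Kx' Ky'.
  by have := pvec_neq0 q'; rewrite (stab_trans_xy (K_stab _ Kx) (K_stab _ Ky)) eqxx.
Qed.

Theorem quat_affine_sigma2 :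
  solvable [set: T] /\ sigma2_is [set: T]%G (1 + #|{: point F}| * #|{: 'cV[F]_2}|).
Proof.
split; first by apply: (@affine_sol _ _ 3 _ 2 4) => // A; apply: quat_set_exp4.
split.
  exists quat_cover; split; [exact: quat_cover_two_covering | exact: card_quat_cover].
move=> C C_cover.
have -> : (1 + #|{: point F}| * #|{: 'cV[F]_2}|)%N = #|{: option (point F * 'cV[F]_2)}|.
  by rewrite [RHS]card_option card_prod.
by apply: (two_covering_card_ge _ test_pair_sep C_cover) => l; rewrite !in_setT.
Qed.

End QuaternionAffine.

Section SumOfTwoSquares.
Variable F : finFieldType.

Lemma card_squares : (#|F| <= #|[set x ^+ 2 | x : F]| * 2)%N.
Proof.
pose sign (x : F) := (enum_rank x < enum_rank (- x))%N.
have sq_sign_inj : injective (fun x : F => (x ^+ 2, sign x)).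
  move=> x y [sq_xy sign_xy]; have := subr_sqr x y; rewrite sq_xy subrr.
  move/esym/eqP; rewrite mulf_eq0 subr_eq0 addr_eq0 => /orP[/eqP // | /eqP xNy].
  have yNx : y = - x by rewrite xNy opprK.
  have [x_eqN | x_neqN] := eqVneq x (- x); first by rewrite yNx -x_eqN.
  move: sign_xy; rewrite /sign yNx opprK.
  have : enum_rank x != enum_rank (- x) by rewrite (inj_eq enum_rank_inj).
  by case: ltngtP => // /val_inj->; rewrite eqxx.
rewrite -cardsT -(card_imset _ sq_sign_inj) -(card_bool) -cardsT -cardsX.
apply/subset_leq_card/subsetP => _ /imsetP[x _ ->].
by rewrite !inE andbT; apply/imsetP; exists x.
Qed.

Lemma sum_two_squares_eqN1 : odd #|F| -> exists a b : F, a ^+ 2 + b ^+ 2 = -1.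
Proof.
move=> F_odd; set S := [set x ^+ 2 | x : F]; set S' := [set -1 - s | s in S].
have card_S' : #|S'| = #|S|.
  by apply: card_imset => s t /eqP; rewrite (inj_eq (addrI _)) (inj_eq oppr_inj) => /eqP.
have F_lt : (#|F| < #|S| + #|S'|)%N.
  rewrite card_S' addnn -mul2n mulnC ltn_neqAle card_squares andbT.
  by apply: contraTneq F_odd => ->; rewrite oddM andbF.
have /card_gt0P[s] : (0 < #|S :&: S'|)%N.
  rewrite -(ltn_add2l #|S :|: S'|) addn0 cardsUI.
  exact: leq_ltn_trans (max_card _) F_lt.
rewrite inE => /andP[/imsetP[x _ ->] /imsetP[_ /imsetP[y _ ->] sq_x]].
by exists x, y; rewrite sq_x subrK.
Qed.

End SumOfTwoSquares.

Lemma Fp_two_neq0 p : prime p -> odd p -> 2 != 0 :> 'F_p.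
Proof.
move=> p_prime p_odd; rewrite -(dvdn_pcharf (pchar_Fp p_prime)).
apply: contraL p_odd => /(dvdn_leq (isT : (0 < 2)%N)) p_le2.
by have /eqP-> : p == 2%N by rewrite eqn_leq p_le2 prime_gt1.
Qed.

Lemma Fp_nat p (x : 'F_p) : exists i : nat, x = i%:R.
Proof. by exists x; rewrite natr_Zp. Qed.

Local Close Scope ring_scope.

Theorem theorem1 (p : nat) (hp : prime p) (hodd : odd p) :
  exists (gT : finGroupType) (G : {group gT}),
    solvable G /\ sigma2_is G (1 + p ^ 2 + p ^ 3 + p ^ 4).
Proof.
have [a [b sumsq_ab]] : exists a b : 'F_p, (a ^+ 2 + b ^+ 2 = -1)%R.
  by apply: sum_two_squares_eqN1; rewrite card_Fp.
have [sol sigma2] := quat_affine_sigma2 sumsq_ab (Fp_two_neq0 hp hodd) (@Fp_nat p).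
exists (affine 3 (quat_group sumsq_ab)), [set: affine 3 (quat_group sumsq_ab)]%G.
split=> //; congr (sigma2_is _ _): sigma2.
by rewrite card_point card_mx card_Fp //; ring.
Qed.
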